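(* Let $(p_k)$, $q$, $\mathbf Q$ and $(\phi_{n+1},\psi_{n+1})_{n\ge0}$ be as in the context. There exists a constant $C_\psi$ depending only on $(p_k)_{k\ge0}$ such that for all $n\ge0$ and $k\ge0$, $\mathbf Q[\psi_{n+1}=k]\le C_\psi\,k\,q^k$. In particular $\sup_{i\ge1}E_{\mathbf Q}[\psi_i]<\infty$.
   Context: $(p_k)_{k\ge0}$ is a probability distribution on $\{0,1,\dots\}$ with generating function $\mathbf f$, $p_0>0$ and $\mathbf f'(1)\in(1,\infty)$; $q\in(0,1)$ is its extinction probability ($\mathbf f(q)=q$). $\mathbf Q$ is the law of a Galton–Watson tree with offspring distribution $q_k=p_kq^{k-1}$, $k\ge0$ (a subcritical law with mean $\mathbf f'(q)<1$); under $\mathbf Q$, $Z_n$ is the number of vertices in generation $n$ and $H=\max\{n:Z_n>0\}$. On an enlarged probability space (still denoted $\mathbf Q$), $(\phi_{n+1},\psi_{n+1})_{n\ge0}$ are independent pairs of random variables with $\mathbf Q[\phi_{n+1}=j,\psi_{n+1}=k]=c_nq_k\mathbf Q[Z_n=0]^{j-1}\mathbf Q[Z_{n+1}=0]^{k-j}$ for $1\le j\le k$, $k\ge1$, where $c_n=\mathbf Q[H=n]/\mathbf Q[H=n+1]$. *)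

From Stdlib Require Import Reals Lra.
From Coquelicot Require Import Coquelicot.
Open Scope R_scope.

Definition gen_fun (p : nat -> R) (s : R) : R := Series (fun k => p k * s ^ k).

Definition qlaw (p : nat -> R) (q : R) (k : nat) : R := p k * q ^ k / q.

(* Q[Z_n = 0] for the Galton-Watson tree with offspring law qlaw p q,
   started from one ancestor (Z_0 = 1): Q[Z_0 = 0] = 0 and, by the
   first-generation decomposition, Q[Z_(n+1) = 0] = sum_k q_k Q[Z_n = 0]^k. *)
Fixpoint QZ0 (p : nat -> R) (q : R) (n : nat) : R :=
  match n with
  | O => 0
  | S m => gen_fun (qlaw p q) (QZ0 p q m)
  end.

(* Q[H = n] = Q[Z_n > 0, Z_(n+1) = 0] = Q[Z_(n+1) = 0] - Q[Z_n = 0]. *)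
Definition QH (p : nat -> R) (q : R) (n : nat) : R :=
  QZ0 p q (S n) - QZ0 p q n.

Definition cst (p : nat -> R) (q : R) (n : nat) : R := QH p q n / QH p q (S n).

(* Joint law: Q[phi_(n+1) = j, psi_(n+1) = k]
   = c_n q_k Q[Z_n=0]^(j-1) Q[Z_(n+1)=0]^(k-j),  1 <= j <= k, k >= 1. *)
Definition phipsi_law (p : nat -> R) (q : R) (n j k : nat) : R :=
  if andb (Nat.leb 1 j) (Nat.leb j k) then
    cst p q n * qlaw p q k * QZ0 p q n ^ (j - 1) * QZ0 p q (S n) ^ (k - j)
  else 0.

(* Marginal law of psi_(n+1): Q[psi_(n+1) = k] = sum_(j = 1..k) of the above
   (sum_f_R0 g k = g 0 + ... + g k; the j = 0 term vanishes). *)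
Definition psi_law (p : nat -> R) (q : R) (n k : nat) : R :=
  sum_f_R0 (fun j => phipsi_law p q n j k) k.

From Stdlib Require Import Reals Lra Lia Classical.
From Coquelicot Require Import Coquelicot.
Open Scope R_scope.

(* Since [Q[H = n+1] >= q_(m+1) Q[Z_1 = 0]^m Q[H = n]] for any [m] with
   [p_(m+1) > 0] (such an [m] exists because the mean exceeds 1), the
   constants [c_n] are bounded uniformly in [n].  Each of the [k] terms of
   [Q[psi_(n+1) = k]] is at most [c_n q_k <= c_n q^k / q], which gives the
   bound [C k q^k]; the first moments are then dominated by the convergent
   series [C sum_k k^2 q^k]. *)

Lemma Series_nonneg (a : nat -> R) :
  (forall n, 0 <= a n) -> ex_series a -> 0 <= Series a.
Proof.
  intros a_ge0 a_ex.
  assert (zero_le := Series_le (fun _ => 0) a (fun n => conj (Rle_refl 0) (a_ge0 n)) a_ex).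
  rewrite (Series_ext (fun _ => 0) (fun n => 0 * 0)) in zero_le by (intros; ring).
  rewrite Series_scal_l in zero_le. lra.
Qed.

Lemma Series_ge_term (a : nat -> R) (m : nat) :
  (forall n, 0 <= a n) -> ex_series a -> a m <= Series a.
Proof.
  intros a_ge0 a_ex.
  rewrite (Series_incr_n a (S m)) by (lia || exact a_ex); simpl pred.
  assert (0 <= Series (fun k => a (S m + k)%nat)).
  { apply Series_nonneg; [intros; apply a_ge0 | exact (proj1 (ex_series_incr_n a (S m)) a_ex)]. }
  assert (a m <= sum_f_R0 a m).
  { destruct m as [|m]; simpl; [lra|].
    assert (0 <= sum_f_R0 a m) by (apply cond_pos_sum; exact a_ge0). lra. }
  lra.
Qed.

Lemma ex_series_sqr_geom (q : R) :
  0 < q < 1 -> ex_series (fun k => INR k * INR k * q ^ k).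
Proof.
  intros q_range.
  apply ex_series_incr_1, ex_series_Rabs, (ex_series_DAlembert _ q); [lra| |].
  { intros n. apply Rgt_not_eq, Rmult_lt_0_compat; [|apply pow_lt; lra].
    apply Rmult_lt_0_compat; apply lt_0_INR; lia. }
  assert (inv_lim : is_lim_seq (fun n => / INR (S n)) 0).
  { apply (is_lim_seq_incr_1 (fun n => / INR n)).
    exact (is_lim_seq_inv _ _ (is_lim_seq_INR) ltac:(discriminate)). }
  assert (ratio_lim : is_lim_seq (fun n => (1 + / INR (S n)) * (1 + / INR (S n)) * q)
                        ((1 + 0) * (1 + 0) * q)).
  { apply is_lim_seq_mult'; [apply is_lim_seq_mult'|apply is_lim_seq_const];
      apply is_lim_seq_plus'; auto using is_lim_seq_const. }
  replace ((1 + 0) * (1 + 0) * q) with q in ratio_lim by ring.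
  refine (is_lim_seq_ext _ _ _ _ ratio_lim); intros n.
  assert (0 < INR (S n)) by (apply lt_0_INR; lia).
  assert (0 < INR (S (S n))) by (apply lt_0_INR; lia).
  assert (0 < q ^ n) by (apply pow_lt; lra).
  rewrite Rabs_pos_eq.
  - rewrite (S_INR (S n)); simpl pow. field. repeat split; lra.
  - simpl pow. apply Rdiv_le_0_compat; apply Rmult_le_pos || apply Rmult_lt_0_compat; nra.
Qed.

Lemma moment_bound_of_geom_bound (a : nat -> R) (q C : R) :
  0 < q < 1 -> (forall k, 0 <= a k <= C * INR k * q ^ k) ->
  ex_series (fun k => INR k * a k) /\
  Series (fun k => INR k * a k) <= C * Series (fun k => INR k * INR k * q ^ k).
Proof.
  intros q_range a_bound.
  assert (term_bound : forall k, 0 <= INR k * a k <= C * (INR k * INR k * q ^ k)).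
  { intros k. destruct (a_bound k). assert (0 <= INR k) by apply pos_INR. split; [nra|].
    replace (C * (INR k * INR k * q ^ k)) with (INR k * (C * INR k * q ^ k)) by ring.
    apply Rmult_le_compat_l; lra. }
  assert (dom_ex : ex_series (fun k => C * (INR k * INR k * q ^ k))).
  { apply (@ex_series_scal_l R_AbsRing R_NormedModule), ex_series_sqr_geom, q_range. }
  split.
  - apply (@ex_series_le R_AbsRing R_CompleteNormedModule (fun k => INR k * a k) (fun k => C * (INR k * INR k * q ^ k))); [|exact dom_ex].
    intros k. change (norm (INR k * a k)) with (Rabs (INR k * a k)).
    rewrite Rabs_pos_eq; apply term_bound.
  - rewrite <- Series_scal_l. exact (Series_le _ _ term_bound dom_ex).
Qed.

Lemma supercritical_pos_offspring (p : nat -> R) :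
  (forall k, 0 <= p k) -> ex_series p ->
  Series p < Series (fun k => INR k * p k) -> exists m, 0 < p (S m).
Proof.
  intros p_ge0 p_ex mean_gt. apply NNPP. intros no_pos.
  assert (Series (fun k => INR k * p k) <= Series p); [|lra].
  apply Series_le; [|exact p_ex]. intros [|k]; simpl INR.
  - specialize (p_ge0 0%nat). lra.
  - assert (p (S k) = 0).
    { specialize (p_ge0 (S k)). destruct (Rle_lt_dec (p (S k)) 0); [lra|].
      exfalso. eauto. }
    replace (p (S k)) with 0. lra.
Qed.

Section ConjugatedLaw.

Variables (p : nat -> R) (q : R).
Hypothesis p_ge0 : forall k, 0 <= p k.
Hypothesis p_sum1 : is_series p 1.
Hypothesis p0_gt0 : 0 < p 0%nat.
Hypothesis q_range : 0 < q < 1.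
Hypothesis q_fixed : gen_fun p q = q.

Let g := gen_fun (qlaw p q).
Let a := QZ0 p q.

Lemma p_le1 k : p k <= 1.
Proof.
  rewrite <- (is_series_unique _ _ p_sum1).
  apply Series_ge_term; [exact p_ge0 | exists 1; exact p_sum1].
Qed.

Lemma qlaw_ge0 k : 0 <= qlaw p q k.
Proof.
  unfold qlaw. apply Rmult_le_pos; [apply Rmult_le_pos; [apply p_ge0 | apply pow_le; lra]|].
  apply Rlt_le, Rinv_0_lt_compat; lra.
Qed.

Lemma qlaw_le_pow k : qlaw p q k <= q ^ k / q.
Proof.
  unfold qlaw, Rdiv. apply Rmult_le_compat_r; [apply Rlt_le, Rinv_0_lt_compat; lra|].
  assert (0 <= q ^ k) by (apply pow_le; lra).
  assert (p k <= 1) by apply p_le1. assert (0 <= p k) by apply p_ge0. nra.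
Qed.

Lemma ex_series_qlaw_pow s : 0 <= s <= 1 -> ex_series (fun k => qlaw p q k * s ^ k).
Proof.
  intros s_range. apply (@ex_series_le R_AbsRing R_CompleteNormedModule _ (fun k => q ^ k / q)).
  - intros k. change (norm (qlaw p q k * s ^ k)) with (Rabs (qlaw p q k * s ^ k)).
    assert (0 <= s ^ k <= 1) by (split; [apply pow_le | rewrite <- (pow1 k); apply pow_incr]; lra).
    assert (0 <= qlaw p q k) by apply qlaw_ge0. assert (qlaw p q k <= q ^ k / q) by apply qlaw_le_pow.
    rewrite Rabs_pos_eq; nra.
  - apply ex_series_scal_r, ex_series_geom. rewrite Rabs_pos_eq; lra.
Qed.

Lemma gen_fun_qlaw_1 : g 1 = 1.
Proof.
  unfold g, gen_fun, qlaw.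
  rewrite (Series_ext _ (fun k => (p k * q ^ k) * / q)) by (intros; rewrite pow1; unfold Rdiv; ring).
  rewrite Series_scal_r. unfold gen_fun in q_fixed. rewrite q_fixed. field. lra.
Qed.

Lemma gen_fun_qlaw_incr x y m : 0 <= x <= y -> y <= 1 ->
  qlaw p q m * (y ^ m - x ^ m) <= g y - g x.
Proof.
  intros xy y_le1. unfold g, gen_fun.
  rewrite <- Series_minus by (apply ex_series_qlaw_pow; lra).
  rewrite Rmult_minus_distr_l.
  apply (Series_ge_term (fun n => qlaw p q n * y ^ n - qlaw p q n * x ^ n) m).
  - intros n. assert (x ^ n <= y ^ n) by (apply pow_incr; lra).
    assert (0 <= qlaw p q n) by apply qlaw_ge0. nra.
  - apply (@ex_series_minus R_AbsRing R_NormedModule); apply ex_series_qlaw_pow; lra.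
Qed.

Lemma QZ0_mono n : 0 <= a n <= a (S n) /\ a (S n) <= 1.
Proof.
  induction n as [|n [[an_ge0 an_le] aSn_le1]].
  - change (a 1%nat) with (g 0). unfold a; simpl QZ0.
    assert (incr := gen_fun_qlaw_incr 0 1 0 ltac:(lra) ltac:(lra)).
    rewrite gen_fun_qlaw_1 in incr. simpl pow in incr.
    assert (0 <= g 0); [|lra].
    apply Series_nonneg; [|apply ex_series_qlaw_pow; lra].
    intros k. apply Rmult_le_pos; [apply qlaw_ge0 | apply pow_le; lra].
  - change (a (S (S n))) with (g (a (S n))).
    change (a (S n)) with (g (a n)) at 2.
    assert (A := gen_fun_qlaw_incr (a n) (a (S n)) 0 ltac:(lra) ltac:(lra)).
    assert (B := gen_fun_qlaw_incr (a (S n)) 1 0 ltac:(lra) ltac:(lra)).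
    rewrite gen_fun_qlaw_1 in B. simpl pow in A, B.
    change (a (S n)) with (g (a n)) in aSn_le1. lra.
Qed.

Lemma QZ0_ge_QZ0_1 n : a 1%nat <= a (S n).
Proof. induction n as [|n IH]; [lra|]. destruct (QZ0_mono (S n)). lra. Qed.

Lemma QZ0_1_gt0 : 0 < a 1%nat.
Proof.
  change (a 1%nat) with (g 0). apply Rlt_le_trans with (qlaw p q 0 * 0 ^ 0).
  - unfold qlaw; simpl. apply Rmult_lt_0_compat; [|lra].
    apply Rmult_lt_0_compat; [lra | apply Rinv_0_lt_compat; lra].
  - apply (Series_ge_term (fun k => qlaw p q k * 0 ^ k) 0); [|apply ex_series_qlaw_pow; lra].
    intros k; apply Rmult_le_pos; [apply qlaw_ge0 | apply pow_le; lra].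
Qed.

Lemma QH_ge0 n : 0 <= QH p q n.
Proof. unfold QH. destruct (QZ0_mono n). fold a. lra. Qed.

(* With [x = a n], [y = a (S n)]: [y^(m+1) - x^(m+1) >= y^m (y - x) >= a_1^m (y - x)]. *)
Lemma QH_succ_ge m n : qlaw p q (S m) * a 1%nat ^ m * QH p q n <= QH p q (S n).
Proof.
  unfold QH. fold a.
  destruct (QZ0_mono n) as [[x_ge0 xy] y_le1]. assert (a1_le := QZ0_ge_QZ0_1 n).
  assert (a1_pos := QZ0_1_gt0).
  set (x := a n) in *. set (y := a (S n)) in *.
  change (a (S (S n))) with (g y). replace y with (g x) at 2 by reflexivity.
  assert (incr := gen_fun_qlaw_incr x y (S m) ltac:(lra) ltac:(lra)).
  replace (g x) with y in incr by reflexivity.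
  assert (a 1%nat ^ m <= y ^ m) by (apply pow_incr; lra).
  assert (x ^ m <= y ^ m) by (apply pow_incr; lra).
  assert (0 <= a 1%nat ^ m) by (apply pow_le; lra).
  assert (pow_incr_bound : a 1%nat ^ m * (y - x) <= y ^ S m - x ^ S m) by (simpl pow; nra).
  assert (0 <= qlaw p q (S m)) by apply qlaw_ge0.
  rewrite Rmult_assoc. eapply Rle_trans; [|exact incr].
  apply Rmult_le_compat_l; assumption.
Qed.

Lemma cst_bound m n : 0 < p (S m) ->
  0 <= cst p q n <= / (qlaw p q (S m) * a 1%nat ^ m).
Proof.
  intros pSm_gt0. set (kappa := qlaw p q (S m) * a 1%nat ^ m).
  assert (kappa_gt0 : 0 < kappa).
  { apply Rmult_lt_0_compat; [|apply pow_lt, QZ0_1_gt0].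
    unfold qlaw. apply Rmult_lt_0_compat; [apply Rmult_lt_0_compat; [lra | apply pow_lt; lra]|].
    apply Rinv_0_lt_compat; lra. }
  assert (step := QH_succ_ge m n). fold kappa in step.
  assert (QH_n_ge0 := QH_ge0 n). unfold cst.
  destruct (Req_dec (QH p q n) 0) as [QH_n0|QH_n0].
  - rewrite QH_n0. unfold Rdiv. rewrite Rmult_0_l.
    split; [lra | apply Rlt_le, Rinv_0_lt_compat; lra].
  - assert (0 < QH p q (S n)) by nra.
    split; [apply Rlt_le, Rdiv_lt_0_compat; lra|].
    apply Rmult_le_reg_r with (QH p q (S n)); [lra|].
    unfold Rdiv. rewrite Rmult_assoc, Rinv_l, Rmult_1_r by lra.
    apply Rmult_le_reg_l with kappa; [lra|].
    rewrite <- Rmult_assoc, Rinv_r by lra. lra.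
Qed.

Lemma QZ0_pow_unit n i : 0 <= a n ^ i <= 1.
Proof.
  destruct (QZ0_mono n).
  split; [apply pow_le | rewrite <- (pow1 i); apply pow_incr]; lra.
Qed.

Lemma phipsi_law_le n j k : 0 <= cst p q n ->
  0 <= phipsi_law p q n j k <= cst p q n * qlaw p q k.
Proof.
  intros c_ge0. unfold phipsi_law. fold a.
  assert (0 <= cst p q n * qlaw p q k) by (apply Rmult_le_pos; [|apply qlaw_ge0]; lra).
  destruct (andb _ _); [|lra].
  destruct (QZ0_pow_unit n (j - 1)), (QZ0_pow_unit (S n) (k - j)).
  set (u := a n ^ (j - 1)) in *. set (v := a (S n) ^ (k - j)) in *.
  set (w := cst p q n * qlaw p q k) in *.
  assert (0 <= w * u <= w) by (split; nra).
  split; [apply Rmult_le_pos|]; nra.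
Qed.

Lemma psi_law_le n k : 0 <= cst p q n ->
  0 <= psi_law p q n k <= INR k * (cst p q n * qlaw p q k).
Proof.
  intros c_ge0. unfold psi_law.
  assert (partial_le : forall N, 0 <= sum_f_R0 (fun j => phipsi_law p q n j k) N
                                  <= INR N * (cst p q n * qlaw p q k)).
  { induction N as [|N IH].
    - unfold phipsi_law; simpl. lra.
    - simpl sum_f_R0. rewrite S_INR. destruct (phipsi_law_le n (S N) k c_ge0). lra. }
  apply partial_le.
Qed.

Lemma psi_law_geom_bound m : 0 < p (S m) ->
  exists C, forall n k, 0 <= psi_law p q n k <= C * INR k * q ^ k.
Proof.
  intros pSm_gt0. set (kappa := qlaw p q (S m) * a 1%nat ^ m).
  exists (/ kappa / q). intros n k.
  destruct (cst_bound m n pSm_gt0) as [c_ge0 c_le]. fold kappa in c_le.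
  destruct (psi_law_le n k c_ge0) as [psi_ge0 psi_le].
  split; [exact psi_ge0|]. eapply Rle_trans; [exact psi_le|].
  assert (0 <= qlaw p q k) by apply qlaw_ge0.
  assert (qlaw p q k <= q ^ k / q) by apply qlaw_le_pow.
  assert (0 <= INR k) by apply pos_INR.
  replace (/ kappa / q * INR k * q ^ k) with (INR k * (/ kappa * (q ^ k / q)))
    by (unfold Rdiv; ring).
  apply Rmult_le_compat_l; [lra|]. apply Rmult_le_compat; lra.
Qed.

End ConjugatedLaw.

Theorem lemma1 (p : nat -> R) (q : R)
  (Hp_nonneg : forall k, 0 <= p k)
  (Hp_sum : is_series p 1)
  (Hp0 : 0 < p 0%nat)
  (Hmean_fin : ex_series (fun k => INR k * p k))
  (Hmean_gt1 : 1 < Series (fun k => INR k * p k))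
  (Hq : 0 < q < 1)
  (Hfix : gen_fun p q = q) :
  exists C : R,
    (forall n k : nat, psi_law p q n k <= C * INR k * q ^ k) /\
    (exists M : R, forall i : nat, (1 <= i)%nat ->
       ex_series (fun k => INR k * psi_law p q (i - 1) k) /\
       Series (fun k => INR k * psi_law p q (i - 1) k) <= M).
Proof.
  destruct (supercritical_pos_offspring p Hp_nonneg (ex_intro _ 1 Hp_sum))
    as [m pSm_gt0].
  { rewrite (is_series_unique _ _ Hp_sum). exact Hmean_gt1. }
  destruct (psi_law_geom_bound p q Hp_nonneg Hp_sum Hp0 Hq Hfix m pSm_gt0) as [C psi_bound].
  exists C. split; [intros n k; apply psi_bound|].
  exists (C * Series (fun k => INR k * INR k * q ^ k)). intros i _.
  exact (moment_bound_of_geom_bound _ q C Hq (psi_bound (i - 1)%nat)).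
Qed.
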